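(* Let $\Omega=\{y\in\mathbb{R}^n: a_i^Ty\le b_i,\ i=1,\ldots,m\}$. There exists a constant $C>0$ depending only on $a_1,\ldots,a_m$ such that the following holds: for every $x\in\Omega$ and $\alpha>0$ for which the nearly-active index set $I(x,\alpha)$ has $q\le n$ elements and $\{a_i:i\in I(x,\alpha)\}$ are linearly independent, the set $\mathcal{D}$ constructed below is a $\Lambda$-positive spanning set for $B(x,\alpha)\cap\Omega$ with $\Lambda\le nC$. Construction: label the nearly-active constraints so that $I(x,\alpha)=\{1,\ldots,q\}$, let $A=[a_1\ \cdots\ a_q]\in\mathbb{R}^{n\times q}$, let $u_1,\ldots,u_n$ be an orthonormal set of left singular vectors of $A$ with $u_1,\ldots,u_q$ spanning $\operatorname{col}(A)$; for $i=1,\ldots,q$ let $\hat d_i:=-(A^\dagger)^Te_i$, $d_i:=\frac{\alpha}{\|\hat d_i\|}\hat d_i$, and let $\alpha_i$ be the largest value in $[0,1]$ with $x-\alpha_id_i\in\Omega$; and set $\mathcal{D}=\{d_1,\ldots,d_q\}\cup\{-\alpha_1d_1,\ldots,-\alpha_qd_q\}\cup\{\pm\alpha u_{q+1},\ldots,\pm\alpha u_n\}$.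
   Context: Nearly-active constraints: $I(x,\alpha):=\{i\in\{1,\ldots,m\}: b_i-\alpha\|a_i\|\le a_i^Tx\}$ (constraints whose boundary hyperplane is within distance $\alpha$ of $x$). $A^\dagger=(A^TA)^{-1}A^T$ is the Moore–Penrose pseudoinverse, $e_i\in\mathbb{R}^q$ the coordinate vectors, $B(y,r)=\{z:\|z-y\|\le r\}$. Given $x\in\Omega$, $\alpha>0$, $\Lambda\ge0$, a set $\{d_1,\ldots,d_p\}$ is a $\Lambda$-positive spanning set for $B(x,\alpha)\cap\Omega$ if $x+d_i\in\Omega$ for all $i$ and, for every $v\in\mathbb{R}^n$ with $x+v\in\Omega$ and $\|v\|\le\alpha$, there exists $c\in\mathbb{R}^p$ with $c\ge0$, $v=\sum_ic_id_i$ and $\|c\|_1\le\Lambda$. *)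

From HB Require Import structures.
From mathcomp Require Import all_boot all_order all_algebra.
Set Implicit Arguments. Unset Strict Implicit. Unset Printing Implicit Defensive.
Import Order.TTheory GRing.Theory Num.Theory.
Local Open Scope ring_scope.

Section Defs.
Context {R : rcfType}.

Definition dotv {n : nat} (u v : 'cV[R]_n) : R := \sum_(k < n) u k 0 * v k 0.
Definition vnorm {n : nat} (v : 'cV[R]_n) : R := Num.sqrt (dotv v v).

Definition Omega {n m : nat} (a : 'I_m -> 'cV[R]_n) (b : 'I_m -> R)
  (y : 'cV[R]_n) : Prop := forall i, dotv (a i) y <= b i.

Definition nearly_active {n m : nat} (a : 'I_m -> 'cV[R]_n) (b : 'I_m -> R)
  (x : 'cV[R]_n) (alpha : R) : {set 'I_m} :=
  [set i | b i - alpha * vnorm (a i) <= dotv (a i) x].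

(* Moore-Penrose pseudoinverse of a full column rank matrix *)
Definition pinv {n q : nat} (A : 'M[R]_(n, q)) : 'M[R]_(q, n) :=
  invmx (A^T *m A) *m A^T.

Definition evec {q : nat} (i : 'I_q) : 'cV[R]_q := delta_mx i 0.

Definition pos_spanning {n : nat} (Om : 'cV[R]_n -> Prop) (x : 'cV[R]_n)
  (alpha Lam : R) (D : seq 'cV[R]_n) : Prop :=
  (forall d, d \in D -> Om (x + d)) /\
  (forall v : 'cV[R]_n, Om (x + v) -> vnorm v <= alpha ->
     exists c : 'I_(size D) -> R,
       (forall i, 0 <= c i) /\
       v = \sum_(i < size D) c i *: nth 0 D i /\
       \sum_(i < size D) `|c i| <= Lam).

End Defs.

From HB Require Import structures.
From mathcomp Require Import all_boot all_order all_algebra.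
From mathcomp Require Import ring lra.
Import Order.TTheory GRing.Theory Num.Theory.
Local Open Scope ring_scope.
Set Implicit Arguments. Unset Strict Implicit. Unset Printing Implicit Defensive.

(* For x + v feasible with |v| <= alpha, split v = w + w' with w in the column space of A
   and w' in the span of the u_k, k >= q.  Since A^T (A^+)^T = I, w = - sum_i <a_i, v> dhat_i,
   and each term is a nonnegative multiple of d_i or of -al_i d_i depending on the sign of
   <a_i, v>; w' is a combination of the +-alpha u_k with coefficients at most 1.  The
   coefficient of d_i is at most |a_i| |dhat_i| by Cauchy-Schwarz.  For -al_i d_i, the
   maximality of al_i gives al_i >= min(1, r_i |dhat_i| / alpha), where r_i >= <a_i, v> is the
   slack of constraint i at x, so this coefficient is at most max(1, |a_i| |dhat_i|).  A
   constant C exceeding 1 and all |a_i| |dhat_i|, over the finitely many labellings, then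
   gives Lambda <= n C. *)

Section InnerProduct.
Variables (R : rcfType) (n : nat).
Implicit Types (u v w : 'cV[R]_n).

Lemma dotvE u v : dotv u v = (u^T *m v) 0 0.
Proof. by rewrite mxE; apply: eq_bigr => k _; rewrite mxE. Qed.

Lemma dotvC u v : dotv u v = dotv v u.
Proof. by apply: eq_bigr => k _; rewrite mulrC. Qed.

Lemma dotvDr u v w : dotv u (v + w) = dotv u v + dotv u w.
Proof. by rewrite /dotv -big_split; apply: eq_bigr => k _; rewrite mxE mulrDr. Qed.

Lemma dotvZr t u v : dotv u (t *: v) = t * dotv u v.
Proof. by rewrite /dotv mulr_sumr; apply: eq_bigr => k _; rewrite mxE mulrCA. Qed.

Lemma dotvNr u v : dotv u (- v) = - dotv u v.
Proof. by rewrite -scaleN1r dotvZr mulN1r. Qed.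

Lemma dotvBr u v w : dotv u (v - w) = dotv u v - dotv u w.
Proof. by rewrite dotvDr dotvNr. Qed.

Lemma dotv0r u : dotv u 0 = 0.
Proof. by rewrite -(scale0r 0) dotvZr mul0r. Qed.

Lemma dotv_sumr I (r : seq I) (P : pred I) (F : I -> 'cV[R]_n) u :
  dotv u (\sum_(i <- r | P i) F i) = \sum_(i <- r | P i) dotv u (F i).
Proof. exact: (big_morph _ (dotvDr u) (dotv0r u)). Qed.

Lemma dotvZl t u v : dotv (t *: u) v = t * dotv u v.
Proof. by rewrite dotvC dotvZr dotvC. Qed.

Lemma dotvBl u v w : dotv (u - v) w = dotv u w - dotv v w.
Proof. by rewrite dotvC dotvBr !(dotvC w). Qed.

Lemma dotv_ge0 u : 0 <= dotv u u.
Proof. by apply: sumr_ge0 => k _; rewrite -expr2 sqr_ge0. Qed.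

Lemma dotv_eq0 u : dotv u u = 0 -> u = 0.
Proof.
move=> u0; apply/matrixP => k l; rewrite (ord1 l) mxE.
have /(_ k isT) := psumr_eq0P (fun k _ => sqr_ge0 (u k 0)) u0.
by move/eqP; rewrite mulf_eq0 orbb => /eqP.
Qed.

Lemma vnorm_ge0 u : 0 <= vnorm u.
Proof. exact: sqrtr_ge0. Qed.

Lemma vnorm_sqr u : vnorm u ^+ 2 = dotv u u.
Proof. by rewrite sqr_sqrtr ?dotv_ge0. Qed.

Lemma vnormZ t u : vnorm (t *: u) = `|t| * vnorm u.
Proof. by rewrite /vnorm dotvZl dotvZr mulrA -expr2 sqrtrM ?sqr_ge0 // sqrtr_sqr. Qed.

Lemma vnormN u : vnorm (- u) = vnorm u.
Proof. by rewrite -scaleN1r vnormZ normrN1 mul1r. Qed.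

Lemma vnorm_gt0 u : u != 0 -> 0 < vnorm u.
Proof.
move=> u_neq0; rewrite lt_def vnorm_ge0 andbT; apply: contraNneq u_neq0 => u0.
by apply/eqP/dotv_eq0; rewrite -vnorm_sqr u0 expr0n.
Qed.

Lemma dotv_CauchySchwarz u v : `|dotv u v| <= vnorm u * vnorm v.
Proof.
have [/dotv_eq0 ->|uu_neq0] := eqVneq (dotv u u) 0.
  by rewrite dotvC dotv0r normr0 mulr_ge0 ?vnorm_ge0.
have uu_gt0 : 0 < dotv u u by rewrite lt_def uu_neq0 dotv_ge0.
have := dotv_ge0 (dotv u u *: v - dotv u v *: u).
rewrite !(dotvBl, dotvBr, dotvZl, dotvZr) (dotvC v u) => expanded.
have sqr_le : dotv u v ^+ 2 <= dotv u u * dotv v v.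
  by rewrite -(ler_pM2l uu_gt0) -subr_ge0; move: expanded; congr (0 <= _); ring.
rewrite -ler_sqr ?nnegrE ?mulr_ge0 ?vnorm_ge0 // exprMn !vnorm_sqr.
by rewrite real_normK ?num_real.
Qed.

Lemma dotv_le u v : dotv u v <= vnorm u * vnorm v.
Proof. exact: le_trans (ler_norm _) (dotv_CauchySchwarz u v). Qed.

Lemma orthonormal_expansion (e : 'I_n -> 'cV[R]_n) :
  (forall j k, dotv (e j) (e k) = (j == k)%:R) ->
  forall v, v = \sum_j dotv (e j) v *: e j.
Proof.
move=> e_on v; pose U : 'M[R]_n := \matrix_(k, j) e j k 0.
have UtU : U^T *m U = 1%:M.
  by apply/matrixP => j k; rewrite !mxE -e_on; apply: eq_bigr => l _; rewrite !mxE.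
rewrite -{1}[v]mul1mx -(mulmx1C UtU) -mulmxA.
apply/matrixP => k l; rewrite (ord1 l) !mxE summxE; apply: eq_bigr => j _.
by rewrite !mxE mulrC; congr (_ * _); apply: eq_bigr => i _; rewrite !mxE.
Qed.

End InnerProduct.

Section ConicCombination.
Variables (R : rcfType) (n : nat).

(* Coefficients are indexed by [nat] rather than ['I_(size D)], which makes concatenation
   easy. *)
Definition cone_comb (D : seq 'cV[R]_n) (v : 'cV[R]_n) (L : R) : Prop :=
  exists c : nat -> R, (forall i, 0 <= c i) /\
    v = \sum_(i < size D) c i *: nth 0 D i /\ \sum_(i < size D) `|c i| <= L.

Lemma cone_comb_le D v L L' : cone_comb D v L -> L <= L' -> cone_comb D v L'.
Proof.
by move=> [c [c_ge0 [v_def cL]]] LL'; exists c; split; [|split; [|apply: le_trans cL LL']].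
Qed.

Lemma cone_comb_cat D1 D2 v1 v2 L1 L2 :
  cone_comb D1 v1 L1 -> cone_comb D2 v2 L2 -> cone_comb (D1 ++ D2) (v1 + v2) (L1 + L2).
Proof.
move=> [c1 [c1_ge0 [-> cL1]]] [c2 [c2_ge0 [-> cL2]]].
exists (fun i => if (i < size D1)%N then c1 i else c2 (i - size D1)%N).
split; first by move=> i; case: ifP.
have shiftF i : (size D1 + i < size D1)%N = false by rewrite ltnNge leq_addr.
rewrite size_cat !big_split_ord /=; split.
  by congr (_ + _); apply: eq_bigr => i _; rewrite nth_cat ?ltn_ord ?shiftF ?addKn.
by apply: lerD; [apply: le_trans _ cL1 | apply: le_trans _ cL2];
  apply: ler_sum => i _; rewrite ?ltn_ord ?shiftF ?addKn.
Qed.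

Lemma cone_comb_map T (f : T -> 'cV[R]_n) (c : T -> R) (s : seq T) :
  (forall j, 0 <= c j) ->
  cone_comb (map f s) (\sum_(j <- s) c j *: f j) (\sum_(j <- s) c j).
Proof.
move=> c_ge0; elim: s => [|j s IHs].
  by exists (fun=> 0); rewrite !big_nil !big_ord0.
rewrite !big_cons; apply: (cone_comb_cat (D1 := [:: f j])) IHs.
by exists (fun=> c j); rewrite !big_ord1 ger0_norm.
Qed.

Lemma cone_comb_map2 T (f g : T -> 'cV[R]_n) (c d : T -> R) (s : seq T) :
  (forall j, 0 <= c j) -> (forall j, 0 <= d j) ->
  cone_comb (map f s ++ map g s) (\sum_(j <- s) (c j *: f j + d j *: g j))
    (\sum_(j <- s) (c j + d j)).
Proof. by move=> c_ge0 d_ge0; rewrite !big_split; apply: cone_comb_cat; apply: cone_comb_map. Qed.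

Lemma pos_spanning_cone (Om : 'cV[R]_n -> Prop) x alpha L D :
  (forall d, d \in D -> Om (x + d)) ->
  (forall v, Om (x + v) -> vnorm v <= alpha -> cone_comb D v L) ->
  pos_spanning Om x alpha L D.
Proof.
move=> D_feasible D_cone; split => // v Omv v_le.
by have [c [c_ge0 [-> cL]]] := D_cone v Omv v_le; exists (fun i => c i).
Qed.

End ConicCombination.

Section SignSplit.
Variables (R : realFieldType) (V : lmodType R).

Lemma scale_sign_split (s t : R) (y : V) : (s < 0 -> t != 0) ->
  Num.max s 0 *: y + ((Num.max s 0 - s) / t) *: - (t *: y) = s *: y.
Proof.
case: ler0P => [s_le0 t_neq0|_ _]; last by rewrite subrr mul0r scale0r addr0.
have [->|s_neq0] := eqVneq s 0; first by rewrite subr0 mul0r !scale0r addr0.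
rewrite scale0r add0r sub0r scalerN scalerA -scaleNr; congr (_ *: _).
by field; apply: t_neq0; rewrite lt_neqAle s_neq0.
Qed.

Lemma sign_split_coef_ge0 (s t : R) : 0 <= t ->
  0 <= Num.max s 0 /\ 0 <= (Num.max s 0 - s) / t.
Proof. by move=> t_ge0; rewrite le_max lexx orbT divr_ge0 // subr_ge0 le_max lexx. Qed.

Lemma sign_split_coef_le (s t c : R) : 0 <= c ->
  (0 < s -> s <= c) -> (s < 0 -> - s / t <= c) ->
  Num.max s 0 + (Num.max s 0 - s) / t <= c.
Proof.
move=> c_ge0 pos_le neg_le; case: ler0P => [s_le0|s_gt0].
  rewrite add0r sub0r; have [->|s_neq0] := eqVneq s 0; first by rewrite oppr0 mul0r.
  by apply: neg_le; rewrite lt_neqAle s_neq0.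
by rewrite subrr mul0r addr0 pos_le.
Qed.

Lemma scale_sign_split1 (s : R) (y : V) :
  Num.max s 0 *: y + (Num.max s 0 - s) *: - y = s *: y.
Proof. by have := @scale_sign_split s 1 y; rewrite divr1 scale1r; apply; rewrite oner_neq0. Qed.

End SignSplit.

Section Pseudoinverse.
Variables (R : rcfType) (n q : nat) (A : 'M[R]_(n, q)).

Hypothesis A_free : row_free A^T.

Lemma unitmx_gram : A^T *m A \in unitmx.
Proof.
rewrite unitmxE unitfE; apply/negP => /det0P [w w_neq0 wAA0].
have wAt0 : w *m A^T = 0.
  apply: trmx_inj; rewrite trmx0; apply: dotv_eq0.
  by rewrite dotvE trmxK trmx_mul trmxK mulmxA -(mulmxA w) wAA0 mul0mx mxE.
by move/eqP: wAt0; rewrite mulmx_free_eq0 // (negbTE w_neq0).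
Qed.

Lemma mul_pinv_mx : pinv A *m A = 1%:M.
Proof. by rewrite /pinv -mulmxA mulVmx // unitmx_gram. Qed.

Lemma trmx_pinv_gram : (pinv A)^T *m (A^T *m A) = A.
Proof.
rewrite /pinv trmx_mul trmxK trmx_inv trmx_mul trmxK -mulmxA mulVmx ?mulmx1 //.
exact: unitmx_gram.
Qed.

Definition dhat_of i : 'cV[R]_n := - ((pinv A)^T *m evec i).

End Pseudoinverse.

Section Constraints.
Variables (R : rcfType) (n m : nat) (a : 'I_m -> 'cV[R]_n).

Lemma Omega_add_near b x alpha y : vnorm y <= alpha ->
  (forall i, i \in nearly_active a b x alpha -> dotv (a i) (x + y) <= b i) ->
  Omega a b (x + y).
Proof.
move=> y_le near_ok i; have [/near_ok //|] := boolP (i \in nearly_active a b x alpha).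
rewrite inE -ltNge dotvDr => far.
have : dotv (a i) y <= vnorm (a i) * alpha.
  by apply: le_trans (dotv_le _ _) _; rewrite ler_wpM2l ?vnorm_ge0.
by move: far; rewrite mulrC; lra.
Qed.

Definition Amat q (f : 'I_q -> 'I_m) : 'M[R]_(n, q) := \matrix_(k < n, j < q) a (f j) k 0.

Definition dir_bound q (f : 'I_q -> 'I_m) i := vnorm (a (f i)) * vnorm (dhat_of (Amat f) i).

(* Ranges over every labelling of at most [n] constraints, hence depends on [a] only.
   Labellings without full column rank contribute junk, but nonnegative, summands. *)
Definition spanning_const : R :=
  1 + \sum_(k < n.+1) \sum_(f : {ffun 'I_k -> 'I_m}) \sum_(i < k) dir_bound f i.

Lemma dir_bound_ge0 q (f : 'I_q -> 'I_m) i : 0 <= dir_bound f i.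
Proof. by rewrite mulr_ge0 ?vnorm_ge0. Qed.

Lemma spanning_const_ge1 : 1 <= spanning_const.
Proof.
rewrite lerDl; apply: sumr_ge0 => k _; apply: sumr_ge0 => f _.
by apply: sumr_ge0 => i _; apply: dir_bound_ge0.
Qed.

Lemma ler_psum_term (I : finType) (F : I -> R) j :
  (forall i, 0 <= F i) -> F j <= \sum_i F i.
Proof. by move=> F_ge0; rewrite (bigD1 j) //= lerDl sumr_ge0. Qed.

Lemma dir_bound_le_const q (f : 'I_q -> 'I_m) i : (q <= n)%N -> dir_bound f i <= spanning_const.
Proof.
move=> q_le_n; apply: ler_wpDl => //.
have -> : dir_bound f i = dir_bound (finfun f) i.
  rewrite /dir_bound ffunE; congr (_ * vnorm (dhat_of _ i)).
  by apply/matrixP => k l; rewrite !mxE ffunE.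
have sum_ge0 k (g : {ffun 'I_k -> 'I_m}) : 0 <= \sum_(l < k) dir_bound g l.
  by apply: sumr_ge0 => l _; apply: dir_bound_ge0.
apply: le_trans (ler_psum_term (Ordinal (q_le_n : (q < n.+1)%N)) _) => [|k].
  apply: le_trans (ler_psum_term (finfun f) _) => //.
  exact: (@ler_psum_term _ (dir_bound (finfun f)) i (dir_bound_ge0 _)).
by apply: sumr_ge0 => g _.
Qed.

Variables (q : nat) (f : 'I_q -> 'I_m).

Lemma col_Amat j : col j (Amat f) = a (f j).
Proof. by apply/matrixP => k l; rewrite (ord1 l) !mxE. Qed.

Lemma trmx_Amat_mulE y j : ((Amat f)^T *m y) j 0 = dotv (a (f j)) y.
Proof. by rewrite -col_Amat dotvE tr_col -row_mul !mxE. Qed.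

Hypothesis A_free : row_free (Amat f)^T.

Lemma dotv_dhat j i : dotv (a (f j)) (dhat_of (Amat f) i) = - (j == i)%:R.
Proof.
rewrite -trmx_Amat_mulE /dhat_of mulmxN mulmxA -trmx_mul mul_pinv_mx // trmx1 mul1mx.
by rewrite !mxE eqxx andbT.
Qed.

Lemma dhat_neq0 i : dhat_of (Amat f) i != 0.
Proof.
apply/eqP => dhat0; have := dotv_dhat i i.
by rewrite dhat0 dotv0r eqxx => /eqP; rewrite eq_sym oppr_eq0 oner_eq0.
Qed.

Lemma Amat_range_expansion z :
  Amat f *m z = - \sum_i dotv (a (f i)) (Amat f *m z) *: dhat_of (Amat f) i.
Proof.
set w := Amat f *m z.
have -> : \sum_i dotv (a (f i)) w *: dhat_of (Amat f) i =
    - ((pinv (Amat f))^T *m ((Amat f)^T *m w)).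
  rewrite [X in _ *m X]matrix_sum_delta mulmx_sumr -sumrN; apply: eq_bigr => i _.
  by rewrite big_ord1 trmx_Amat_mulE /dhat_of scalerN -scalemxAr.
by rewrite opprK /w mulmxA (mulmxA _ (Amat f)) -(mulmxA (pinv _)^T) trmx_pinv_gram.
Qed.

End Constraints.

Section NearlyActiveSpanning.
Variables (R : rcfType) (n m : nat) (a : 'I_m -> 'cV[R]_n) (b : 'I_m -> R).
Variables (x : 'cV[R]_n) (alpha : R) (q : nat) (sigma : 'I_q -> 'I_m).
Variables (u : 'I_n -> 'cV[R]_n) (al : 'I_q -> R).
Hypotheses (x_in : Omega a b x) (alpha_gt0 : 0 < alpha) (q_le_n : (q <= n)%N).
Hypothesis sigma_onto : forall i, i \in nearly_active a b x alpha -> exists j, sigma j = i.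
Hypothesis A_free : row_free (Amat a sigma)^T.
Hypothesis u_orthonormal : forall j k, dotv (u j) (u k) = (j == k)%:R.
Hypothesis u_span : forall v, (exists w, v = Amat a sigma *m w) <->
  exists c : 'I_n -> R, v = \sum_(j < n | (j < q)%N) c j *: u j.

Let dhat := dhat_of (Amat a sigma).
Let d i := (alpha / vnorm (dhat i)) *: dhat i.

Hypothesis al_max : forall i, 0 <= al i <= 1 /\ Omega a b (x - al i *: d i) /\
  forall t, 0 <= t <= 1 -> Omega a b (x - t *: d i) -> t <= al i.

Let C := spanning_const a.

Lemma vnorm_dhat_gt0 i : 0 < vnorm (dhat i).
Proof. exact/vnorm_gt0/dhat_neq0. Qed.

Lemma vnorm_d i : vnorm (d i) = alpha.
Proof.
have dhat_gt0 := vnorm_dhat_gt0 i.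
by rewrite vnormZ ger0_norm ?divr_ge0 ?ltW // divfK ?gt_eqF.
Qed.

Lemma dotv_a_d j i : dotv (a (sigma j)) (d i) = - (alpha / vnorm (dhat i)) * (j == i)%:R.
Proof. by rewrite dotvZr dotv_dhat // mulrN mulNr. Qed.

Lemma dotv_a_u j (k : 'I_n) : (q <= k)%N -> dotv (a (sigma j)) (u k) = 0.
Proof.
move=> q_le_k.
have [c ->] : exists c : 'I_n -> R, a (sigma j) = \sum_(l < n | (l < q)%N) c l *: u l.
  by apply/u_span; exists (evec j); rewrite -colE col_Amat.
rewrite dotvC dotv_sumr big1 // => l l_lt_q; rewrite dotvZr u_orthonormal.
by case: eqP => [k_eq_l|_]; [rewrite k_eq_l leqNgt l_lt_q in q_le_k | rewrite mulr0].
Qed.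

Lemma Omega_add_sigma y : vnorm y <= alpha ->
  (forall j, dotv (a (sigma j)) (x + y) <= b (sigma j)) -> Omega a b (x + y).
Proof.
move=> y_le near_ok; apply: Omega_add_near y_le _ => i /sigma_onto [j <-].
exact: near_ok.
Qed.

Lemma Omega_add_dotv_le0 y : vnorm y <= alpha ->
  (forall j, dotv (a (sigma j)) y <= 0) -> Omega a b (x + y).
Proof.
move=> y_le y_descent; apply: Omega_add_sigma => // j.
by rewrite dotvDr -[b _]addr0 lerD.
Qed.

Lemma vnorm_u k : vnorm (u k) = 1.
Proof. by rewrite /vnorm u_orthonormal eqxx sqrtr1. Qed.

Let F := [seq j : 'I_n <- enum 'I_n | (q <= j)%N].
Let D := [seq d i | i <- enum 'I_q] ++ [seq - (al i *: d i) | i <- enum 'I_q] ++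
  [seq alpha *: u j | j <- F] ++ [seq - (alpha *: u j) | j <- F].

Lemma D_feasible y : y \in D -> Omega a b (x + y).
Proof.
have vnorm_alpha_u k : vnorm (alpha *: u k) <= alpha by rewrite vnormZ vnorm_u mulr1 gtr0_norm.
rewrite !mem_cat => /or4P [] /mapP [k k_in ->].
- apply: Omega_add_dotv_le0 => [|j]; first by rewrite vnorm_d.
  rewrite dotv_a_d mulNr oppr_le0 mulr_ge0 // divr_ge0 ?vnorm_ge0 //; exact: ltW.
- by have [_ []] := al_max k.
- move: k_in; rewrite mem_filter => /andP [q_le_k _].
  by apply: Omega_add_dotv_le0 => // j; rewrite dotvZr dotv_a_u ?mulr0.
- move: k_in; rewrite mem_filter => /andP [q_le_k _].
  by apply: Omega_add_dotv_le0 => [|j]; rewrite ?vnormN // dotvNr dotvZr dotv_a_u ?mulr0 ?oppr0.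
Qed.

Lemma step_le_al i t : 0 <= t <= 1 ->
  t * alpha / vnorm (dhat i) <= b (sigma i) - dotv (a (sigma i)) x -> t <= al i.
Proof.
move=> /andP [t_ge0 t_le1] t_le; have [_ [_ al_maximal]] := al_max i.
apply: al_maximal; first by rewrite t_ge0.
apply: Omega_add_sigma => [|j].
  by rewrite vnormN vnormZ vnorm_d ger0_norm // ler_piMl // ltW.
rewrite dotvDr dotvNr dotvZr dotv_a_d; have [->|j_neq_i] := eqVneq j i.
  by move: t_le; rewrite mulr1 mulrN opprK mulrA; lra.
by rewrite mulr0 mulr0 oppr0 addr0.
Qed.

Let coef v i := - dotv (a (sigma i)) v * vnorm (dhat i) / alpha.

Lemma dotv_a_scaled_le v i : vnorm v <= alpha ->
  `|dotv (a (sigma i)) v| * vnorm (dhat i) / alpha <= C.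
Proof.
move=> v_le; apply: le_trans (dir_bound_le_const a sigma i q_le_n).
rewrite /dir_bound ler_pdivrMr // mulrAC ler_pM2r ?vnorm_dhat_gt0 //.
by apply: le_trans (dotv_CauchySchwarz _ _) _; rewrite ler_wpM2l ?vnorm_ge0.
Qed.

Lemma coef_le v i : vnorm v <= alpha -> coef v i <= C.
Proof.
move=> v_le; apply: le_trans (dotv_a_scaled_le i v_le).
by rewrite ler_pM2r ?invr_gt0 // ler_pM2r ?vnorm_dhat_gt0 // -normrN ler_norm.
Qed.

(* [al i >= min 1 (r N / alpha)], where the slack [r] of constraint [sigma i] at [x]
   is at least [dotv (a (sigma i)) v] because [x + v] is feasible. *)
Lemma neg_coef_le v i : Omega a b (x + v) -> vnorm v <= alpha ->
  coef v i < 0 -> 0 < al i /\ - coef v i / al i <= C.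
Proof.
move=> v_in v_le coef_lt0; set p := dotv (a (sigma i)) v; set N := vnorm (dhat i).
set r := b (sigma i) - dotv (a (sigma i)) x.
have N_gt0 : 0 < N := vnorm_dhat_gt0 i.
have C_ge1 : 1 <= C := spanning_const_ge1 a.
have -> : - coef v i = p * N / alpha by rewrite /coef !mulNr opprK.
have p_gt0 : 0 < p.
  by move: coef_lt0; rewrite /coef !mulNr oppr_lt0 pmulr_lgt0 ?invr_gt0 // pmulr_lgt0.
have p_le_r : p <= r by have := v_in (sigma i); rewrite dotvDr /r /p; lra.
have r_gt0 : 0 < r := lt_le_trans p_gt0 p_le_r.
have [small|large] := lerP (r * N / alpha) 1.
  have t_le_al : r * N / alpha <= al i.
    apply: step_le_al; first by rewrite small divr_ge0 ?mulr_ge0 ?ltW.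
    by rewrite divfK ?gt_eqF // mulfK ?gt_eqF.
  have al_gt0 : 0 < al i by apply: lt_le_trans t_le_al; rewrite !divr_gt0 ?mulr_gt0.
  split=> //; rewrite ler_pdivrMr //; apply: le_trans (ler_peMl (ltW al_gt0) C_ge1).
  by apply: le_trans t_le_al; rewrite ler_pM2r ?invr_gt0 // ler_pM2r.
have one_le_al : 1 <= al i.
  apply: step_le_al; first by rewrite ler01 lexx.
  by rewrite mul1r ler_pdivrMr //; move: large; rewrite ltr_pdivlMr // mul1r => /ltW.
have al_gt0 : 0 < al i := lt_le_trans ltr01 one_le_al.
split=> //; rewrite ler_pdivrMr //; apply: le_trans (ler_peMr (le_trans ler01 C_ge1) one_le_al).
apply: le_trans (dotv_a_scaled_le i v_le).
by rewrite ler_pM2r ?invr_gt0 // ler_pM2r // ler_norm.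
Qed.

Lemma decomposition_d_u v : v = \sum_i coef v i *: d i +
  \sum_(k < n | (q <= k)%N) (dotv (u k) v / alpha) *: (alpha *: u k).
Proof.
have v_expand := orthonormal_expansion u_orthonormal v.
rewrite (bigID (fun k : 'I_n => (k < q)%N)) /= in v_expand.
set w := \sum_(k < n | (k < q)%N) _ in v_expand.
have tail_eq : \sum_(k < n | ~~ (k < q)%N) dotv (u k) v *: u k =
    \sum_(k < n | (q <= k)%N) (dotv (u k) v / alpha) *: (alpha *: u k).
  by apply: eq_big => [k|k _]; [rewrite -leqNgt | rewrite scalerA divfK ?gt_eqF].
have dotv_w j : dotv (a (sigma j)) w = dotv (a (sigma j)) v.
  rewrite [in RHS]v_expand dotvDr [X in _ + X]dotv_sumr big1 ?addr0 // => k.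
  by rewrite -leqNgt => q_le_k; rewrite dotvZr dotv_a_u ?mulr0.
have [z w_def] : exists z, w = Amat a sigma *m z by apply/u_span; exists (fun k => dotv (u k) v).
have head_eq : w = \sum_i coef v i *: d i.
  rewrite w_def (Amat_range_expansion A_free z) -w_def -sumrN; apply: eq_bigr => i _.
  have N_neq0 : vnorm (dhat i) != 0 by rewrite gt_eqF ?vnorm_dhat_gt0.
  rewrite dotv_w /coef /d scalerA -scaleNr; congr (_ *: _).
  by field; rewrite N_neq0 gt_eqF.
by rewrite {1}v_expand head_eq tail_eq.
Qed.

Lemma sum_enum_ord (V : nmodType) (G : 'I_q -> V) : \sum_(i <- enum 'I_q) G i = \sum_i G i.
Proof. by rewrite big_enum. Qed.

Lemma sum_tail (V : nmodType) (G : 'I_n -> V) :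
  \sum_(k <- F) G k = \sum_(k < n | (q <= k)%N) G k.
Proof. by rewrite big_filter big_enum_cond. Qed.

Lemma D_cone v : Omega a b (x + v) -> vnorm v <= alpha -> cone_comb D v (n%:R * C).
Proof.
move=> v_in v_le; pose s k := dotv (u k) v / alpha.
have C_ge0 : 0 <= C := le_trans ler01 (spanning_const_ge1 a).
have al_ge0 i : 0 <= al i by have [/andP []] := al_max i.
have s_le1 k : `|s k| <= 1.
  rewrite normrM normfV (gtr0_norm alpha_gt0) ler_pdivrMr // mul1r.
  by apply: le_trans (dotv_CauchySchwarz _ _) _; rewrite vnorm_u mul1r.
have d_coef_ge0 i := sign_split_coef_ge0 (coef v i) (al_ge0 i).
have u_coef_ge0 k : 0 <= Num.max (s k) 0 /\ 0 <= Num.max (s k) 0 - s k.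
  by rewrite -[_ - _]divr1; apply: sign_split_coef_ge0.
have split_d i : Num.max (coef v i) 0 *: d i +
    ((Num.max (coef v i) 0 - coef v i) / al i) *: - (al i *: d i) = coef v i *: d i.
  by apply: scale_sign_split => /(neg_coef_le v_in v_le) [/gt_eqF ->].
rewrite {1}[v]decomposition_d_u -(eq_bigr _ (fun i _ => split_d i)) -sum_enum_ord.
rewrite -(eq_bigr _ (fun k _ => scale_sign_split1 (s k) _)) -sum_tail /D catA.
apply: cone_comb_le.
  apply: cone_comb_cat; apply: cone_comb_map2 => i;
    by [case: (d_coef_ge0 i) | case: (u_coef_ge0 i)].
have d_bound i : Num.max (coef v i) 0 + (Num.max (coef v i) 0 - coef v i) / al i <= C.
  apply: sign_split_coef_le => // [_|/(neg_coef_le v_in v_le) []//].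
  exact: coef_le.
have u_bound k : Num.max (s k) 0 + (Num.max (s k) 0 - s k) <= C.
  rewrite -[_ - s k]divr1; apply: sign_split_coef_le => // [_|_]; rewrite ?divr1;
    apply: le_trans (spanning_const_ge1 a); apply: le_trans (s_le1 k);
    by rewrite ?ler_norm // -normrN ler_norm.
rewrite sum_enum_ord sum_tail /=.
apply: le_trans (lerD (ler_sum _ (fun i _ => d_bound i)) (ler_sum _ (fun k _ => u_bound k))) _.
have -> : \sum_(k < n | (q <= k)%N) C = C *+ (n - q) by rewrite -sumr_const_nat big_geq_mkord.
by rewrite sumr_const card_ord -mulrnDr subnKC // mulr_natl.
Qed.

Lemma D_pos_spanning : pos_spanning (Omega a b) x alpha (n%:R * C) D.
Proof. exact: pos_spanning_cone D_feasible D_cone. Qed.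

End NearlyActiveSpanning.

Theorem corollary5p9 (R : rcfType) (n m : nat) (a : 'I_m -> 'cV[R]_n) :
  exists C : R, 0 < C /\
  forall (b : 'I_m -> R) (x : 'cV[R]_n) (alpha : R) (q : nat)
         (sigma : 'I_q -> 'I_m)            (* labelling of I(x,alpha) *)
         (u : 'I_n -> 'cV[R]_n)            (* left singular vectors of A *)
         (al : 'I_q -> R),                 (* the alpha_i *)
    Omega a b x -> 0 < alpha ->
    injective sigma ->
    (forall i, i \in nearly_active a b x alpha <-> exists j, sigma j = i) ->
    (q <= n)%N ->
    let A : 'M[R]_(n, q) := \matrix_(k < n, j < q) a (sigma j) k 0 in
    row_free A^T ->                        (* {a_i : i in I} lin. indep. *)
    (forall j k, dotv (u j) (u k) = (j == k)%:R) ->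
    (forall j, exists s : R, 0 <= s /\ A *m A^T *m u j = s *: u j) ->
    (forall v : 'cV[R]_n, (exists w : 'cV[R]_q, v = A *m w) <->
       exists c : 'I_n -> R, v = \sum_(j < n | (j < q)%N) c j *: u j) ->
    let dhat (i : 'I_q) : 'cV[R]_n := - ((pinv A)^T *m evec i) in
    let d (i : 'I_q) : 'cV[R]_n := (alpha / vnorm (dhat i)) *: dhat i in
    (forall i, 0 <= al i <= 1 /\ Omega a b (x - al i *: d i) /\
       forall t : R, 0 <= t <= 1 -> Omega a b (x - t *: d i) -> t <= al i) ->
    let D : seq 'cV[R]_n :=
      [seq d i | i <- enum 'I_q] ++
      [seq - (al i *: d i) | i <- enum 'I_q] ++
      [seq alpha *: u j | j <- filter (fun j : 'I_n => (q <= j)%N) (enum 'I_n)] ++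
      [seq - (alpha *: u j) | j <- filter (fun j : 'I_n => (q <= j)%N) (enum 'I_n)] in
    exists Lam : R, 0 <= Lam /\ Lam <= n%:R * C /\
      pos_spanning (Omega a b) x alpha Lam D.
Proof.
have C_ge1 := spanning_const_ge1 a.
exists (spanning_const a); split; first exact: lt_le_trans ltr01 C_ge1.
move=> b x alpha q sigma u al x_in alpha_gt0 _ labelling q_le_n A A_free u_on _ u_span.
move=> dhat d al_max D; exists (n%:R * spanning_const a).
split; first by rewrite mulr_ge0 // (le_trans ler01 C_ge1).
split=> //; apply: D_pos_spanning => // i; exact: (labelling i).1.
Qed.
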